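(* Let $t(0)t(1)t(2)\cdots$ be the Thue–Morse sequence, and define $f:\mathbb{N}\times\mathbb{N}\to\{0,1\}$ by $f(i,j)=t(i+j)$. Then $f$ is frameless: there do not exist $m,n\ge0$ and $p,q\ge1$ such that $f(m,n+i)=f(m+p,n+i)$ for all $0\le i\le q$ and $f(m+j,n)=f(m+j,n+q)$ for all $0\le j\le p$.
   Context: $\mathbb{N}=\{0,1,2,\dots\}$. The Thue–Morse sequence is defined by $t(n)=$ the number of $1$ bits in the binary representation of $n$, taken modulo $2$ (so it begins $0110100110010110\cdots$). A picture frame in a coloring $f$ of $\mathbb{N}\times\mathbb{N}$ is a rectangular block $\{m,\dots,m+p\}\times\{n,\dots,n+q\}$ with $p,q\ge1$ whose first and last rows agree and whose first and last columns agree; $f$ is frameless if it has no picture frame. *)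

From mathcomp Require Import all_boot.
Set Implicit Arguments. Unset Strict Implicit. Unset Printing Implicit Defensive.

Fixpoint popcount_fuel (fuel n : nat) : nat :=
  match fuel with
  | 0 => 0
  | fuel'.+1 => if n is 0 then 0 else odd n + popcount_fuel fuel' n./2
  end.
Definition popcount (n : nat) : nat := popcount_fuel n n.

Definition thue_morse (n : nat) : bool := odd (popcount n).

Definition picture_frame {C : Type} (f : nat -> nat -> C) (m n p q : nat) : Prop :=
  1 <= p /\ 1 <= q /\
  (forall i, i <= q -> f m (n + i) = f (m + p) (n + i)) /\
  (forall j, j <= p -> f (m + j) n = f (m + j) (n + q)).

Definition frameless {C : Type} (f : nat -> nat -> C) : Prop :=
  ~ exists m n p q, picture_frame f m n p q.

(* On the diagonal coloring s(i + j), a frame with sides p and q makes the first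
   row (if p <= q) or the first column (if q < p) an overlap, a factor
   s(a) ... s(a + 2r) of period r = min(p, q).  Thue-Morse is overlap-free
   because t(2n + b) = t(n) xor b.  Hence t(2n) <> t(2n + 1), so t has no
   three equal consecutive letters, and t(2n + 1) <> t(2n + 2) exactly when
   t(n) = t(n + 1).  An overlap of even period 2k halves to one of period k.
   An overlap of odd period r >= 3 matches four consecutive letters at an even
   position with four at an odd position 2m + 1; the two unequal pairs starting
   at even positions are copied to the pairs starting at 2m + 1 and 2m + 3,
   which gives t(m) = t(m + 1) = t(m + 2). *)
From mathcomp Require Import all_boot.
From mathcomp Require Import zify.

Notation t := thue_morse.

Lemma popcount_fuel_enough f g n :
  n <= f -> n <= g -> popcount_fuel f n = popcount_fuel g n.
Proof.
elim: f g n => [|f IH] [|g] [|n] //= le_nf le_ng.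
by congr (_ + _); apply: IH; lia.
Qed.

Lemma popcount_rec n : 0 < n -> popcount n = odd n + popcount n./2.
Proof.
case: n => [|n] // _; rewrite /popcount /=; congr (_ + _).
by apply: popcount_fuel_enough; lia.
Qed.

Lemma thue_morse_double_add n (b : bool) : t (n.*2 + b) = t n (+) b.
Proof.
case: b; rewrite /t ?addn0 ?addn1.
  by rewrite popcount_rec //= odd_double uphalf_double addbT.
case: n => [|n] //; rewrite popcount_rec ?double_gt0 //.
by rewrite odd_double doubleK addbF.
Qed.

Lemma thue_morse_pair_double n : t n.*2 != t (n.*2).+1.
Proof.
move: (thue_morse_double_add n false) (thue_morse_double_add n true).
by rewrite /= addn0 addn1 => -> ->; case: t.
Qed.

Lemma thue_morse_pair_doubleS n :
  (t (n.*2).+1 != t (n.*2).+2) = (t n == t n.+1).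
Proof.
move: (thue_morse_double_add n true) (thue_morse_double_add n.+1 false).
rewrite /= addn0 addn1 doubleS => -> ->.
by case: (t n); case: (t n.+1).
Qed.

Lemma thue_morse_no_triple n : t n = t n.+1 -> t n.+1 = t n.+2 -> False.
Proof.
rewrite -(odd_double_half n); case: odd => /= [_|eq01 _].
- by rewrite -doubleS => eq12; move: (thue_morse_pair_double n./2.+1); rewrite eq12 eqxx.
- by move: (thue_morse_pair_double n./2); rewrite eq01 eqxx.
Qed.

Lemma thue_morse_window_even_odd n m :
  (forall i, i < 4 -> t (n.*2 + i) = t ((m.*2).+1 + i)) -> False.
Proof.
move=> eqs.
have pair_eq i : i < 3 ->
    (t (n.*2 + i) != t (n.*2 + i).+1) = (t ((m.*2).+1 + i) != t ((m.*2).+1 + i).+1).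
  by move=> lt_i3; rewrite -!addnS !eqs // ltnW.
have := pair_eq 0 isT; rewrite !addn0 thue_morse_pair_doubleS.
rewrite (negPf (thue_morse_pair_double n)) => /esym/eqP eq01.
have := pair_eq 2 isT; rewrite !addn2 -!doubleS thue_morse_pair_doubleS.
rewrite (negPf (thue_morse_pair_double n.+1)) => /esym/eqP eq12.
exact: thue_morse_no_triple eq01 eq12.
Qed.

(* [s a, ..., s (a + 2p)] is a word axaxa with |ax| = p. *)
Definition overlap {T : Type} (s : nat -> T) (a p : nat) : Prop :=
  forall i, i <= p -> s (a + i) = s (a + p + i).

Lemma thue_morse_overlap_odd a p : odd p -> ~ overlap t a p.
Proof.
move=> odd_p ov.
have [p_le1|p_gt1] := leqP p 1.
  have p1 : p = 1 by lia.
  subst p.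
  move: (ov 0 isT) (ov 1 isT); rewrite !addn0 !addn1.
  exact: thue_morse_no_triple.
have eqs i : i < 4 -> t (a + i) = t (a + p + i).
  by move=> lt_i4; apply: ov; lia.
case/boolP: (odd a) => par_a.
- apply: (thue_morse_window_even_odd ((a + p)./2) (a./2)) => i /eqs /esym.
  have -> : ((a + p)./2).*2 = a + p by lia.
  by have -> : (a./2).*2.+1 = a by lia.
- apply: (thue_morse_window_even_odd (a./2) ((a + p)./2)) => i /eqs.
  have -> : (a./2).*2 = a by lia.
  by have -> : ((a + p)./2).*2.+1 = a + p by lia.
Qed.

Lemma thue_morse_overlap_half a k : overlap t a k.*2 -> overlap t a./2 k.
Proof.
move=> ov j le_jk; have := ov j.*2; rewrite leq_double => /(_ le_jk).
have -> : a + j.*2 = (a./2 + j).*2 + odd a by lia.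
have -> : a + k.*2 + j.*2 = (a./2 + k + j).*2 + odd a by lia.
by rewrite !thue_morse_double_add => /addIb.
Qed.

Lemma thue_morse_overlap_free a p : 0 < p -> ~ overlap t a p.
Proof.
elim/ltn_ind: p a => p IH a p_gt0 ov.
case odd_p: (odd p); first exact: thue_morse_overlap_odd odd_p ov.
have p_double : p = p./2.*2 by lia.
have half_lt : p./2 < p by lia.
have half_gt0 : 0 < p./2 by lia.
by apply: (IH p./2 half_lt a./2 half_gt0); apply: thue_morse_overlap_half; rewrite -p_double.
Qed.

Lemma diagonal_frame_overlap {T : Type} (s : nat -> T) m n p q :
  picture_frame (fun i j => s (i + j)) m n p q ->
  exists2 r, 0 < r & overlap s (m + n) r.
Proof.
case=> p_gt0 [q_gt0 [rows cols]].
have [le_pq|lt_qp] := leqP p q.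
- exists p => // i le_ip; have := rows i (leq_trans le_ip le_pq).
  by rewrite !addnA (addnAC m p n).
- exists q => // j le_jq; have := cols j (leq_trans le_jq (ltnW lt_qp)).
  by rewrite (addnAC m j n) (addnAC m j (n + q)) !addnA.
Qed.

Theorem theorem3 : frameless (fun i j => thue_morse (i + j)).
Proof.
case=> m [n [p [q /diagonal_frame_overlap [r r_gt0]]]].
exact: thue_morse_overlap_free.
Qed.
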